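(* For every $n\ge2$, the problem FGP of gathering all robots (including a faulty one) at a single point in the presence of at most one crash fault is unsolvable under the SSYNC scheduler by any algorithm (of any size $\le n$); i.e., its MAS is $\infty$.
   Context: Model. A swarm consists of $n\ge1$ robots $r_1,\dots,r_n$, modeled as points in $\mathbb R^2$. Each robot $r_i$ has a local right-handed $x$-$y$ coordinate system $Z_i$ whose origin is always the robot's current position, with arbitrary (adversarially chosen, fixed) unit length and axis orientation; robots do not share coordinate systems. The configuration at time $t$ is the multiset $P_t$ of the $n$ robot positions (robots can detect multiplicities). A target function $\phi$ maps each finite multiset $P$ of points of $\mathbb R^2$ with $(0,0)\in P$ to a point $\phi(P)\in\mathbb R^2$. Time is discrete, $t=0,1,2,\dots$. Under the semi-synchronous (SSYNC) scheduler, at each time $t$ an adversary chooses a set of robots to activate; each activated robot $r_i$ observes $P_t$ expressed in $Z_i$, evaluates its target function on this multiset, and moves to the resulting point (interpreted in $Z_i$), arriving before time $t+1$; non-activated robots do not move. Schedules are fair: every robot is activated infinitely often. An algorithm of size $m$ is a set $\Phi$ of $m$ distinct target functions ($m\le n$); an assignment is a surjection $\mathcal A$ from the robots onto $\Phi$, robot $r_i$ using $\mathcal A(r_i)$. $\Phi$ solves a problem if for every assignment, every choice of local coordinate systems, every initial configuration and every fair SSYNC schedule, the resulting execution solves the problem. The MAS of a problem is the least $m$ such that some algorithm of size $m$ solves it, and $\infty$ if no algorithm of any size $m\le n$ solves it. Crash faults. The adversary may choose up to $f$ robots to be faulty and, for each, a time from which it crashes: from then on it never moves again (even when activated); before that it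 behaves correctly. ''Solves under at most $f$ crashes'' quantifies additionally over all such crash patterns. Problem. FGP: starting from any initial configuration, with at most one crashed robot, reach a configuration in which all $n$ robots (faulty ones included) occupy a single point. *)

From Stdlib Require Import Reals List Permutation Arith Bool.
Import ListNotations.
Open Scope R_scope.

Definition pt := (R * R)%type.
Definition origin : pt := (0, 0).

Definition padd (p q : pt) : pt := (fst p + fst q, snd p + snd q).
Definition psub (p q : pt) : pt := (fst p - fst q, snd p - snd q).

(* A local frame is an orientation-preserving similarity (rotation and
   positive scaling), encoded by (a,b) <> (0,0): the local vector q has
   global displacement  (a q1 - b q2, b q1 + a q2)  (complex multiplication
   by a+bi).  The origin of the frame is always the robot's position. *)
Definition frame_ok (f : pt) : Prop := f <> (0, 0).

Definition cmul (f q : pt) : pt :=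
  (fst f * fst q - snd f * snd q, snd f * fst q + fst f * snd q).

Definition finv (f : pt) : pt :=
  let d := fst f * fst f + snd f * snd f in (fst f / d, - snd f / d).

Definition to_global (f o q : pt) : pt := padd o (cmul f q).
Definition to_local (f o p : pt) : pt := cmul (finv f) (psub p o).

(* A target function: a function on finite multisets (represented as lists,
   the value being required to depend only on the multiset) that contain
   the origin. *)
Definition target_fun := list pt -> pt.

Definition tf_wellformed (phi : target_fun) : Prop :=
  forall P Q, In origin P -> Permutation P Q -> phi P = phi Q.

Definition tf_distinct (phi psi : target_fun) : Prop :=
  exists P, In origin P /\ phi P <> psi P.

Definition algorithm (m : nat) (phi : nat -> target_fun) : Prop :=
  (forall k, (k < m)%nat -> tf_wellformed (phi k)) /\
  (forall k l, (k < m)%nat -> (l < m)%nat -> k <> l -> tf_distinct (phi k) (phi l)).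

Definition assignment (n m : nat) (asg : nat -> nat) : Prop :=
  (forall i, (i < n)%nat -> (asg i < m)%nat) /\
  (forall k, (k < m)%nat -> exists i, (i < n)%nat /\ asg i = k).

(* SSYNC schedule: act t i = robot i activated at time t; fairness. *)
Definition fair (n : nat) (act : nat -> nat -> bool) : Prop :=
  forall i t, (i < n)%nat -> exists t', (t <= t')%nat /\ act t' i = true.

(* Crash pattern with at most one crash: None, or Some (robot j, time c):
   robot j does not move at any time t >= c. *)
Definition crash_ok (n : nat) (cr : option (nat * nat)) : Prop :=
  match cr with None => True | Some (j, _) => (j < n)%nat end.

Definition crashedb (cr : option (nat * nat)) (t i : nat) : bool :=
  match cr with
  | None => false
  | Some (j, c) => andb (Nat.eqb j i) (Nat.leb c t)
  end.

Definition config_list (n : nat) (pos : nat -> pt) : list pt :=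
  map pos (seq 0 n).

Fixpoint exec (n : nat) (phi : nat -> target_fun) (asg : nat -> nat)
    (fr : nat -> pt) (init : nat -> pt) (act : nat -> nat -> bool)
    (cr : option (nat * nat)) (t : nat) : nat -> pt :=
  match t with
  | O => init
  | S t' =>
      let pos := exec n phi asg fr init act cr t' in
      fun i =>
        if andb (act t' i) (negb (crashedb cr t' i)) then
          to_global (fr i) (pos i)
            (phi (asg i) (map (to_local (fr i) (pos i)) (config_list n pos)))
        else pos i
  end.

Definition gathered (n : nat) (pos : nat -> pt) : Prop :=
  forall i j, (i < n)%nat -> (j < n)%nat -> pos i = pos j.

Definition solves_FGP (n m : nat) (phi : nat -> target_fun) : Prop :=
  forall asg fr init act cr,
    assignment n m asg ->
    (forall i, (i < n)%nat -> frame_ok (fr i)) ->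
    fair n act ->
    crash_ok n cr ->
    exists t, gathered n (exec n phi asg fr init act cr t).

From Stdlib Require Import Reals List Permutation Arith.
From Stdlib Require Import Bool Lia Lra ClassicalEpsilon FunctionalExtensionality.

(* The adversary fixes all frames to the identity, starts from a
   non-gathered configuration, and builds a round-robin schedule that never
   gathers.  At time t it looks at robot r = t mod n and activates, in order
   of preference, only r; or everybody; or, if both of these would gather,
   everybody except r.  The key observation (lemma [step_allbut_fixed]) is
   that in this last case every robot other than r wants to stay where it
   is, so activating them leaves the configuration unchanged.  Hence the
   adversarial run [adv_run] is never gathered.

   If the third case ever occurs, say at time t0, the adversary crashes r
   at t0 and activates everybody from then on: the configuration is frozen
   forever.  Otherwise robot r = t mod n is activated at every time t, so
   the plain run is fair. *)

Section Adversary.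

Variables (n : nat) (phi : nat -> target_fun) (asg : nat -> nat) (fr : nat -> pt).

Definition dest (pos : nat -> pt) (i : nat) : pt :=
  to_global (fr i) (pos i)
    (phi (asg i) (map (to_local (fr i) (pos i)) (config_list n pos))).

Definition step (A : nat -> bool) (pos : nat -> pt) : nat -> pt :=
  fun i => if Nat.ltb i n && A i then dest pos i else pos i.

Lemma step_ext (A B : nat -> bool) (pos : nat -> pt) :
  (forall i, A i = B i) -> step A pos = step B pos.
Proof.
  intros HAB. apply functional_extensionality; intro i.
  unfold step. rewrite HAB. reflexivity.
Qed.

Lemma exec_succ (act : nat -> nat -> bool) (cr : option (nat * nat))
    (init : nat -> pt) (t : nat) :
  exec n phi asg fr init (fun t i => Nat.ltb i n && act t i) cr (S t)
  = step (fun i => act t i && negb (crashedb cr t i))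
      (exec n phi asg fr init (fun t i => Nat.ltb i n && act t i) cr t).
Proof.
  apply functional_extensionality; intro i.
  unfold step, dest. simpl. rewrite andb_assoc. reflexivity.
Qed.

Definition single (r : nat) : nat -> bool := fun i => Nat.eqb i r.
Definition everyone : nat -> bool := fun _ => true.
Definition allbut (r : nat) : nat -> bool := fun i => negb (Nat.eqb i r).

Lemma step_allbut_fixed (r : nat) (pos : nat -> pt) :
  (r < n)%nat ->
  gathered n (step (single r) pos) -> gathered n (step everyone pos) ->
  step (allbut r) pos = pos.
Proof.
  intros Hr Hsingle Heveryone.
  apply functional_extensionality; intro i. unfold step, allbut.
  destruct (Nat.ltb_spec i n) as [Hi|Hi]; [|reflexivity].
  destruct (Nat.eqb_spec i r) as [->|Hir]; [reflexivity|]. simpl.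
  assert (Hpos : pos i = dest pos r).
  { specialize (Hsingle i r Hi Hr). unfold step, single in Hsingle.
    apply Nat.ltb_lt in Hi. apply Nat.eqb_neq in Hir.
    rewrite Hi, Hir, Nat.eqb_refl, (proj2 (Nat.ltb_lt r n) Hr) in Hsingle.
    exact Hsingle. }
  assert (Hdest : dest pos i = dest pos r).
  { specialize (Heveryone i r Hi Hr). unfold step, everyone in Heveryone.
    apply Nat.ltb_lt in Hi.
    rewrite Hi, (proj2 (Nat.ltb_lt r n) Hr) in Heveryone. exact Heveryone. }
  congruence.
Qed.

Definition stuck (t : nat) (pos : nat -> pt) : Prop :=
  gathered n (step (single (t mod n)) pos) /\ gathered n (step everyone pos).

Definition adv_choice (t : nat) (pos : nat -> pt) : nat -> bool :=
  let r := t mod n in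
  if excluded_middle_informative (gathered n (step (single r) pos)) then
    if excluded_middle_informative (gathered n (step everyone pos))
    then allbut r else everyone
  else single r.

Lemma adv_choice_stuck (t : nat) (pos : nat -> pt) :
  stuck t pos -> adv_choice t pos = allbut (t mod n).
Proof.
  intros [Hsingle Heveryone]. unfold adv_choice.
  destruct excluded_middle_informative; [|contradiction].
  destruct excluded_middle_informative; [reflexivity|contradiction].
Qed.

Lemma adv_choice_active (t : nat) (pos : nat -> pt) :
  ~ stuck t pos -> adv_choice t pos (t mod n) = true.
Proof.
  intros Hnot. unfold adv_choice.
  destruct excluded_middle_informative as [Hsingle|]; [|apply Nat.eqb_refl].
  destruct excluded_middle_informative as [Heveryone|]; [|reflexivity].
  exfalso. exact (Hnot (conj Hsingle Heveryone)).
Qed.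

Lemma adv_step_not_gathered (t : nat) (pos : nat -> pt) :
  (0 < n)%nat -> ~ gathered n pos -> ~ gathered n (step (adv_choice t pos) pos).
Proof.
  intros Hn Hpos. unfold adv_choice.
  destruct excluded_middle_informative as [Hsingle|Hsingle]; [|exact Hsingle].
  destruct excluded_middle_informative as [Heveryone|Heveryone]; [|exact Heveryone].
  rewrite step_allbut_fixed by (auto; apply Nat.mod_upper_bound; lia).
  exact Hpos.
Qed.

Fixpoint adv_run (init : nat -> pt) (t : nat) : nat -> pt :=
  match t with
  | O => init
  | S t' => step (adv_choice t' (adv_run init t')) (adv_run init t')
  end.

Lemma adv_run_not_gathered (init : nat -> pt) (t : nat) :
  (0 < n)%nat -> ~ gathered n init -> ~ gathered n (adv_run init t).
Proof.
  intros Hn Hinit. induction t as [|t IH]; [exact Hinit|].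
  apply adv_step_not_gathered; assumption.
Qed.

Lemma crash_schedule_defeats (init : nat -> pt) (t0 : nat) :
  (0 < n)%nat -> ~ gathered n init -> stuck t0 (adv_run init t0) ->
  exists act cr, fair n act /\ crash_ok n cr /\
    forall t, ~ gathered n (exec n phi asg fr init act cr t).
Proof.
  intros Hn Hinit Hstuck.
  set (r0 := t0 mod n).
  set (choice := fun t i =>
         if Nat.leb t0 t then true else adv_choice t (adv_run init t) i).
  set (cr := Some (r0, t0)).
  exists (fun t i => Nat.ltb i n && choice t i), cr.
  assert (Hr0 : (r0 < n)%nat) by (apply Nat.mod_upper_bound; lia).
  assert (Hbefore : forall t, (t <= t0)%nat ->
            exec n phi asg fr init (fun t i => Nat.ltb i n && choice t i) cr t
            = adv_run init t).
  { induction t as [|t IH]; intros Ht; [reflexivity|].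
    rewrite exec_succ, IH by lia. simpl. apply step_ext; intro i.
    unfold choice, cr, crashedb.
    destruct (Nat.leb_spec t0 t); [lia|]. rewrite andb_false_r, andb_true_r.
    reflexivity. }
  assert (Hafter : forall k,
            exec n phi asg fr init (fun t i => Nat.ltb i n && choice t i) cr (t0 + k)
            = adv_run init t0).
  { induction k as [|k IH]; [rewrite Nat.add_0_r; apply Hbefore; lia|].
    rewrite Nat.add_succ_r, exec_succ, IH.
    rewrite <- (step_allbut_fixed r0 (adv_run init t0) Hr0) at 2
      by apply Hstuck.
    apply step_ext; intro i. unfold choice, cr, crashedb, allbut.
    destruct (Nat.leb_spec t0 (t0 + k)); [|lia].
    rewrite andb_true_r, (Nat.eqb_sym r0 i). reflexivity. }
  split; [|split].
  - intros i t Hi. exists (t0 + t)%nat. split; [lia|].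
    unfold choice. rewrite (proj2 (Nat.ltb_lt i n) Hi).
    destruct (Nat.leb_spec t0 (t0 + t)); [reflexivity|lia].
  - exact Hr0.
  - intros t. destruct (Nat.le_gt_cases t t0) as [Ht|Ht].
    + rewrite Hbefore by exact Ht. apply adv_run_not_gathered; assumption.
    + replace t with (t0 + (t - t0))%nat by lia. rewrite Hafter.
      apply adv_run_not_gathered; assumption.
Qed.

Lemma round_robin_schedule_defeats (init : nat -> pt) :
  (0 < n)%nat -> ~ gathered n init -> (forall t, ~ stuck t (adv_run init t)) ->
  exists act cr, fair n act /\ crash_ok n cr /\
    forall t, ~ gathered n (exec n phi asg fr init act cr t).
Proof.
  intros Hn Hinit Hnever.
  set (choice := fun t i => adv_choice t (adv_run init t) i).
  exists (fun t i => Nat.ltb i n && choice t i), None.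
  assert (Hrun : forall t,
            exec n phi asg fr init (fun t i => Nat.ltb i n && choice t i) None t
            = adv_run init t).
  { induction t as [|t IH]; [reflexivity|].
    rewrite exec_succ, IH. simpl. apply step_ext; intro i.
    apply andb_true_r. }
  split; [|split].
  - intros i t Hi. exists (n * t + i)%nat. split; [nia|].
    assert (Hmod : ((n * t + i) mod n)%nat = i).
    { rewrite Nat.mul_comm, Nat.add_comm, Nat.Div0.mod_add.
      apply Nat.mod_small; exact Hi. }
    pose proof (adv_choice_active _ _ (Hnever (n * t + i)%nat)) as Hactive.
    rewrite Hmod in Hactive.
    rewrite (proj2 (Nat.ltb_lt i n) Hi). exact Hactive.
  - exact I.
  - intros t. rewrite Hrun. apply adv_run_not_gathered; assumption.
Qed.

Lemma adversary_prevents_gathering (init : nat -> pt) :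
  (0 < n)%nat -> ~ gathered n init ->
  exists act cr, fair n act /\ crash_ok n cr /\
    forall t, ~ gathered n (exec n phi asg fr init act cr t).
Proof.
  intros Hn Hinit.
  destruct (classic (exists t0, stuck t0 (adv_run init t0))) as [[t0 Hstuck]|Hnever].
  - exact (crash_schedule_defeats init t0 Hn Hinit Hstuck).
  - apply round_robin_schedule_defeats; [assumption|assumption|].
    intros t Hstuck. exact (Hnever (ex_intro _ t Hstuck)).
Qed.

End Adversary.

Theorem theoremT4050 :
  forall n : nat, (2 <= n)%nat ->
  forall (m : nat) (phi : nat -> target_fun),
    (1 <= m <= n)%nat -> algorithm m phi -> ~ solves_FGP n m phi.
Proof.
  intros n Hn m phi Hm _ Hsolves.
  set (asg := fun i => if Nat.ltb i m then i else 0%nat).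
  set (fr := fun _ : nat => (1, 0) : pt).
  set (init := fun i => if Nat.eqb i 0 then (1, 0) else (0, 0) : pt).
  assert (Hasg : assignment n m asg).
  { split.
    - intros i Hi. unfold asg. destruct (Nat.ltb_spec i m); lia.
    - intros k Hk. exists k. split; [lia|]. unfold asg.
      destruct (Nat.ltb_spec k m); lia. }
  assert (Hfr : forall i, (i < n)%nat -> frame_ok (fr i)).
  { intros i _ E. injection E. lra. }
  assert (Hinit : ~ gathered n init).
  { intros G. specialize (G 0%nat 1%nat ltac:(lia) ltac:(lia)).
    injection G. lra. }
  destruct (adversary_prevents_gathering n phi asg fr init ltac:(lia) Hinit)
    as (act & cr & Hfair & Hcr & Hnever).
  destruct (Hsolves asg fr init act cr Hasg Hfr Hfair Hcr) as [t Ht].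
  exact (Hnever t Ht).
Qed.
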